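(* Let $\mathcal{B}=\langle V,F,E\rangle$ be a self-contained finite bipartite graph and $M$ an arbitrary perfect matching for $\mathcal{B}$. Then the directed cluster graph $\mathrm{merge}(\mathrm{clust}(\mathcal{G}(\mathcal{B},M)))$ coincides with the output of Algorithm 1 applied to $\mathcal{B}$ with no exogenous vertices.
   Context: $\mathrm{adj}_{\mathcal{B}}(X)$ is the set of neighbours of $X$. $F'\subseteq F$ is self-contained if $|F'|=|\mathrm{adj}_{\mathcal{B}}(F')|$ and $|F''|\le|\mathrm{adj}_{\mathcal{B}}(F'')|$ for all $F''\subseteq F'$; $\mathcal{B}$ is self-contained if $|F|=|V|$ and $F$ is self-contained; minimal self-contained = non-empty self-contained with no non-empty strict self-contained subset. A directed cluster graph is a pair $\langle\mathcal{V},\mathcal{E}\rangle$ with $\mathcal{V}$ a partition of a vertex set and $\mathcal{E}$ a set of edges $x\to C$ from vertices to clusters. $M(X)$ is the set of vertices matched by $M$ to vertices of $X$. (i) $\mathcal{G}(\mathcal{B},M)$: directed graph on $V\cup F$ with, for each $(v-f)\in E$, the edge $f\to v$ if $(v-f)\in M$ and $v\to f$ otherwise. (ii) $\mathrm{clust}(\mathcal{G})=\langle\mathcal{V}',\mathcal{E}'\rangle$: $\mathcal{V}'$ the partition into strongly connected components and $\mathcal{E}'=\{x\to\mathrm{cl}(w):(x\to w)\text{ in }\mathcal{G},\ x\notin\mathrm{cl}(w)\}$, with $\mathrm{cl}(w)$ the component of $w$. (iii) $\mathrm{merge}(\langle\mathcal{V}',\mathcal{E}'\rangle)=\langle\mathcal{V},\mathcal{E}\rangle$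 with $\mathcal{V}=\{S\cup M(S):S\in\mathcal{V}'\}$ and $\mathcal{E}=\{x\to S\cup M(S):(x\to S)\in\mathcal{E}',\ x\notin M(S)\}$. Algorithm 1 (no exogenous vertices): start with $\mathcal{V}=\mathcal{E}=\emptyset$ and $\mathcal{B}'=\langle V',F',E'\rangle=\mathcal{B}$; while $\mathcal{B}'$ is non-null: choose a minimal self-contained set $S_F$ of $\mathcal{B}'$, let $C=S_F\cup\mathrm{adj}_{\mathcal{B}'}(S_F)$, add $C$ to $\mathcal{V}$, add $v\to C$ for every $v\in\mathrm{adj}_{\mathcal{B}}(S_F)\setminus\mathrm{adj}_{\mathcal{B}'}(S_F)$, replace $\mathcal{B}'$ by its subgraph induced by $(V'\cup F')\setminus C$. Output $\langle\mathcal{V},\mathcal{E}\rangle$. *)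

From mathcomp Require Import all_boot.
Set Implicit Arguments.
Unset Strict Implicit.
Unset Printing Implicit Defensive.

(* Bipartite graph B = <V, F, E>: V, F finite types (disjoint via the sum type
   V + F), E v f = true iff (v - f) is an edge. *)

Section Defs.
Variables (V F : finType) (E : V -> F -> bool).

Notation vx := (V + F)%type.

(* directed cluster graph: (set of clusters, set of edges x -> C) *)
Definition cgraph := ({set {set vx}} * {set vx * {set vx}})%type.

Definition adjB (Vs : {set V}) (X : {set F}) : {set V} :=
  [set v in Vs | [exists f in X, E v f]].

Definition self_contained_in (Vs : {set V}) (Fs : {set F}) (S : {set F}) : bool :=
  [&& S \subset Fs, #|S| == #|adjB Vs S| &
      [forall S' : {set F}, (S' \subset S) ==> (#|S'| <= #|adjB Vs S'|)]].

Definition minimal_self_contained_in (Vs : {set V}) (Fs : {set F}) (S : {set F}) : bool :=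
  [&& self_contained_in Vs Fs S, S != set0 &
      [forall S' : {set F}, ((S' \proper S) && (S' != set0)) ==>
                            ~~ self_contained_in Vs Fs S']].

Definition bip_self_contained : bool :=
  (#|F| == #|V|) && self_contained_in setT setT setT.

Definition perfect_matching (M : {set V * F}) : Prop :=
  [/\ forall v f, (v, f) \in M -> E v f,
      forall v, exists! f, (v, f) \in M &
      forall f, exists! v, (v, f) \in M].

Definition gedge (M : {set V * F}) : rel vx := fun x y =>
  match x, y with
  | inl v, inr f => E v f && ((v, f) \notin M)
  | inr f, inl v => E v f && ((v, f) \in M)
  | _, _ => false
  end.

Definition cl (M : {set V * F}) (w : vx) : {set vx} :=
  [set y | connect (gedge M) w y && connect (gedge M) y w].

Definition clust (M : {set V * F}) : cgraph :=
  ([set cl M w | w : vx],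
   [set (p.1, cl M p.2) | p : vx * vx & gedge M p.1 p.2 && (p.1 \notin cl M p.2)]).

Definition matched (M : {set V * F}) (x y : vx) : bool :=
  match x, y with
  | inl v, inr f => (v, f) \in M
  | inr f, inl v => (v, f) \in M
  | _, _ => false
  end.

Definition Mimg (M : {set V * F}) (X : {set vx}) : {set vx} :=
  [set y | [exists x in X, matched M x y]].

Definition merge_cg (M : {set V * F}) (G : cgraph) : cgraph :=
  ([set S :|: Mimg M S | S in G.1],
   [set (p.1, p.2 :|: Mimg M p.2) | p in G.2 & p.1 \notin Mimg M p.2]).

Definition alg_cluster (Vs : {set V}) (S : {set F}) : {set vx} :=
  ((@inr V F) @: S) :|: ((@inl V F) @: adjB Vs S).

(* alg1 Vs Fs acc out : running Algorithm 1 from current subgraph B' (with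
   vertex sets Vs, Fs) and accumulated output acc can end with output out.
   Every choice of minimal self-contained set is allowed. *)
Inductive alg1 : {set V} -> {set F} -> cgraph -> cgraph -> Prop :=
| alg1_stop (acc : cgraph) : alg1 set0 set0 acc acc
| alg1_step (Vs : {set V}) (Fs : {set F}) (S : {set F}) (acc out : cgraph) :
    (Vs != set0) || (Fs != set0) ->
    minimal_self_contained_in Vs Fs S ->
    alg1 (Vs :\: adjB Vs S) (Fs :\: S)
         (alg_cluster Vs S |: acc.1,
          acc.2 :|: [set (inl v, alg_cluster Vs S) | v in adjB setT S :\: adjB Vs S])
         out ->
    alg1 Vs Fs acc out.

End Defs.

From mathcomp Require Import all_boot.
Set Implicit Arguments.
Unset Strict Implicit.
Unset Printing Implicit Defensive.

(* A perfect matching is a bijection pm : V -> F; identifying every vertex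
   with the F-end of its matched edge (frep) collapses G(B,M) onto a digraph
   on F, so merging a strongly connected component with its mates gives the
   frep-preimage of the F-part of that component.  Along any run of
   Algorithm 1 the remaining F-vertices are closed under successors in G and
   the remaining V-vertices are exactly their mates.  In such a subgraph a set
   of F-vertices is self-contained iff it is closed under predecessors, so a
   minimal one is the set of ancestors of any of its members: a source
   strongly connected component.  Each step therefore outputs one merged
   component together with exactly its incoming merged edges. *)

Lemma connect_closed (T : finType) (e : rel T) (A : pred T) :
  (forall x y, e x y -> A x -> A y) -> forall x y, connect e x y -> A x -> A y.
Proof.
move=> eA x y /connectP [p]; elim: p x => [|z p IHp] x /=; first by move=> _ ->.
by case/andP=> exz pz yl Ax; apply: IHp pz yl (eA _ _ exz Ax).
Qed.

Lemma connect_closed_rev (T : finType) (e : rel T) (A : pred T) :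
  (forall x y, e x y -> A y -> A x) -> forall x y, connect e x y -> A y -> A x.
Proof.
move=> eA x y exy; apply: (@connect_closed _ [rel u v | e v u]) => [u v /eA //|].
by rewrite connect_rev.
Qed.

Lemma connect_unique_out (T : finType) (e : rel T) x z y :
  (forall u, e x u -> u = z) -> connect e x y -> x != y -> connect e z y.
Proof.
move=> outx /connectP [[|u p]] /=; first by move=> _ ->; rewrite eqxx.
by case/andP=> /outx -> pz -> _; apply/connectP; exists p.
Qed.

Lemma connect_unique_in (T : finType) (e : rel T) x z y :
  (forall u, e u y -> u = z) -> connect e x y -> x != y -> connect e x z.
Proof.
move=> iny; have connectV u v : connect [rel a b | e b a] u v = connect e v u.
  by rewrite connect_rev.
by rewrite -connectV eq_sym -connectV; apply: connect_unique_out => u /iny.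
Qed.

Lemma unique_choice_fin (A B : finType) (R : A -> B -> bool) :
  (forall a, exists! b, R a b) -> exists f : A -> B, forall a b, R a b = (f a == b).
Proof.
move=> uniqR; have exR a : exists b, R a b by have [b []] := uniqR a; exists b.
exists (fun a => xchoose (exR a)) => a b; apply/idP/eqP => [Rab|<-]; last exact: xchooseP.
by have [b0 [_ u0]] := uniqR a; rewrite -(u0 _ Rab) -(u0 _ (xchooseP (exR a))).
Qed.

Lemma perfect_matching_bij (V F : finType) (E : V -> F -> bool) (M : {set V * F}) :
  perfect_matching E M ->
  exists (pm : V -> F) (vof : F -> V),
    [/\ cancel pm vof, cancel vof pm, forall v, E v (pm v)
      & forall v f, ((v, f) \in M) = (pm v == f)].
Proof.
case=> ME /unique_choice_fin [pm inM] /(unique_choice_fin (R := fun f v => (v, f) \in M)).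
case=> vof inM'; exists pm, vof; split=> [v|f|v|v f //].
- by apply/eqP; rewrite -inM' inM.
- by apply/eqP; rewrite -inM inM'.
- by apply: ME; rewrite inM.
Qed.

Section MatchedGraph.
Variables (V F : finType) (E : V -> F -> bool) (M : {set V * F}).
Variables (pm : V -> F) (vof : F -> V).
Hypotheses (pmK : cancel pm vof) (vofK : cancel vof pm).
Hypothesis E_pm : forall v, E v (pm v).
Hypothesis inM : forall v f, ((v, f) \in M) = (pm v == f).

Local Notation G := (gedge E M).
Local Notation cl := (cl E M).

Definition frep (x : V + F) : F := match x with inl v => pm v | inr f => f end.

Lemma gedge_inr f y : G (inr f) y = (y == inl (vof f)).
Proof.
case: y => [v|g] //=; rewrite inM (can2_eq pmK vofK) -sum_eqE /=.
by case: eqP => [->|]; rewrite ?andbF // andbT -{2}[f]vofK E_pm.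
Qed.

Lemma gedge_to_inl v x : G x (inl v) -> x = inr (pm v).
Proof. by case: x => [//|f]; rewrite gedge_inr => /eqP [->]; rewrite vofK. Qed.

Lemma gedge_mate v : G (inr (pm v)) (inl v).
Proof. by rewrite gedge_inr pmK. Qed.

Lemma frep_eq x y : (frep x == frep y) = (x == y) || matched M x y.
Proof.
by case: x y => [u|f] [v|g]; rewrite -sum_eqE /= ?inM ?orbF ?(can_eq pmK).
Qed.

Lemma setU_Mimg X : X :|: Mimg M X = frep @^-1: (frep @: X).
Proof.
apply/setP=> y; rewrite !inE; apply/orP/imsetP => [[Xy|/existsP [x /andP [Xx xy]]]|].
- by exists y.
- by exists x => //; apply/eqP; rewrite eq_sym frep_eq xy orbT.
case=> x Xx /eqP; rewrite eq_sym frep_eq => /orP [/eqP <-|xy]; first by left.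
by right; apply/existsP; exists x; rewrite Xx.
Qed.

Lemma cl_refl w : w \in cl w.
Proof. by rewrite inE connect0. Qed.

Lemma cl_sym x y : (x \in cl y) = (y \in cl x).
Proof. by rewrite !inE andbC. Qed.

Lemma cl_eq x y : x \in cl y -> cl x = cl y.
Proof.
rewrite inE => /andP [yx xy]; apply/setP=> z; rewrite !inE.
apply/andP/andP=> -[z1 z2]; split.
- exact: connect_trans yx z1.
- exact: connect_trans z2 xy.
- exact: connect_trans xy z1.
- exact: connect_trans z2 yx.
Qed.

Lemma cl_inl v w : inl v \in cl w -> w != inl v -> inr (pm v) \in cl w.
Proof.
rewrite !inE => /andP [wv vw] wNv; apply/andP; split.
  exact: connect_unique_in (@gedge_to_inl v) wv wNv.
exact: connect_trans (connect1 (gedge_mate v)) vw.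
Qed.

Lemma cl_inr f w : inr f \in cl w -> inr f != w -> inl (vof f) \in cl w.
Proof.
rewrite !inE => /andP [wf fw] fNw; apply/andP; split.
  by apply: connect_trans wf (connect1 _); rewrite gedge_inr.
by apply: (@connect_unique_out _ G) fw fNw => u; rewrite gedge_inr => /eqP.
Qed.

Definition fcl g : {set F} := [set f | inr f \in cl (inr g)].
Definition mcl g : {set V + F} := frep @^-1: fcl g.

Lemma fcl_refl g : g \in fcl g.
Proof. by rewrite inE cl_refl. Qed.

Lemma frep_cl_inr g : frep @: cl (inr g) = fcl g.
Proof.
apply/setP=> f; rewrite [in RHS]inE; apply/imsetP/idP => [[[v|h] gx ->] //|gf].
  by apply: cl_inl gx _.
by exists (inr f).
Qed.

Lemma frep_cl_inl v : frep @: cl (inl v) = fcl (pm v).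
Proof.
have [vcl|vNcl] := boolP (inl v \in cl (inr (pm v))).
  by rewrite (cl_eq vcl) frep_cl_inr.
have cl_v : cl (inl v) = [set inl v].
  apply/setP=> y; rewrite in_set1; apply/idP/eqP => [vy|->]; last exact: cl_refl.
  apply/eqP; apply: contraNT vNcl => yNv.
  by rewrite cl_sym -(cl_eq vy); apply: cl_inl; rewrite // cl_sym.
have fcl_v : fcl (pm v) = [set pm v].
  apply/setP=> f; rewrite in_set1 inE; apply/idP/eqP => [vf|->]; last exact: cl_refl.
  apply/eqP; apply: contraNT vNcl => fNv.
  rewrite -{1}[v]pmK -(cl_eq vf); apply: cl_inr; first by rewrite cl_sym.
  by apply: contra fNv => /eqP [->].
by rewrite cl_v imset_set1 fcl_v.
Qed.

Lemma frep_cl w : frep @: cl w = fcl (frep w).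
Proof. by case: w => [v|g]; [apply: frep_cl_inl | apply: frep_cl_inr]. Qed.

Lemma merged_cl w : cl w :|: Mimg M (cl w) = mcl (frep w).
Proof. by rewrite setU_Mimg frep_cl. Qed.

Lemma notin_merged_cl x w :
  (x \notin cl w) && (x \notin Mimg M (cl w)) = (x \notin mcl (frep w)).
Proof. by rewrite -merged_cl in_setU negb_or. Qed.

Definition medges g : {set (V + F) * {set V + F}} :=
  [set (inl v, mcl g) | v in [set v | E v g && (pm v \notin fcl g)]].

Definition merged_part (D : {set F}) : cgraph V F :=
  (mcl @: D, \bigcup_(g in D) medges g).

Lemma mem_medges x w :
  G x w -> x \notin mcl (frep w) -> (x, mcl (frep w)) \in medges (frep w).
Proof.
case: x w => [v|f] [u|g] //=; rewrite inM.
  by case/andP=> vg _; rewrite inE => vNg; apply/imsetP; exists v; rewrite // inE vg.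
by case/andP=> _ /eqP <-; rewrite inE /= fcl_refl.
Qed.

Lemma merge_clust : merge_cg M (clust E M) = merged_part setT.
Proof.
rewrite /merge_cg /clust /merged_part /=; congr pair.
  apply/setP=> X; apply/imsetP/imsetP => [[_ /imsetP [w _ ->] ->]|[g _ ->]].
    by exists (frep w); rewrite ?merged_cl.
  by exists (cl (inr g)); [apply: imset_f | rewrite merged_cl].
apply/setP=> -[x Y]; apply/imsetP/bigcupP => [[p]|[g _ /imsetP [v]]].
  rewrite inE => /andP [] /imsetP [[y w]].
  rewrite inE /= => /andP [yw yNw] -> /= yNM [-> ->].
  by exists (frep w); rewrite // merged_cl mem_medges // -notin_merged_cl yNw.
rewrite inE => /andP [vg vNg] [-> ->].
have: inl v \notin mcl (frep (inr g)) by rewrite inE.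
rewrite -notin_merged_cl => /andP [vNcl vNM].
exists (inl v, cl (inr g)); last by rewrite merged_cl.
rewrite inE vNM andbT; apply/imsetP; exists (inl v, inr g) => //.
rewrite inE /= vNcl andbT inM vg /=.
by apply: contraNneq vNg => <-; rewrite fcl_refl.
Qed.

Definition succ_closed (Fs : {set F}) := forall v g, E v g -> pm v \in Fs -> g \in Fs.

Lemma succ_closed_connect (Fs : {set F}) x y :
  succ_closed Fs -> connect G x y -> frep x \in Fs -> frep y \in Fs.
Proof.
move=> cFs; apply: (connect_closed (A := [pred z | frep z \in Fs])) => {x y}.
case=> [v|f] [u|g] //=; rewrite inM.
  by case/andP=> vg _; apply: cFs.
by case/andP=> _ /eqP ->.
Qed.

Lemma preimset_sub_adjB (Fs S : {set F}) :
  S \subset Fs -> pm @^-1: S \subset adjB E (pm @^-1: Fs) S.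
Proof.
move=> SFs; apply/subsetP=> v; rewrite !inE => Sv; rewrite (subsetP SFs _ Sv).
by apply/existsP; exists (pm v); rewrite Sv E_pm.
Qed.

Lemma card_preimset_pm (S : {set F}) : #|pm @^-1: S| = #|S|.
Proof. by rewrite -(can2_imset_pre _ vofK pmK) card_imset //; apply: can_inj vofK. Qed.

Lemma self_containedE (Fs S : {set F}) :
  self_contained_in E (pm @^-1: Fs) Fs S =
  (S \subset Fs) && (adjB E (pm @^-1: Fs) S == pm @^-1: S).
Proof.
rewrite /self_contained_in; have [SFs|] //= := boolP (S \subset Fs).
have hall (S' : {set F}) : S' \subset S -> #|S'| <= #|adjB E (pm @^-1: Fs) S'|.
  move=> S'S; rewrite -card_preimset_pm subset_leq_card //.
  exact/preimset_sub_adjB/(subset_trans S'S).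
have -> : [forall S' : {set F}, (S' \subset S) ==> (#|S'| <= #|adjB E (pm @^-1: Fs) S'|)].
  by apply/forallP=> S'; apply/implyP; apply: hall.
rewrite andbT [_ == pm @^-1: S]eq_sym eqEcard preimset_sub_adjB //= card_preimset_pm.
by rewrite eqn_leq hall.
Qed.

Lemma adjB_mate (Fs S : {set F}) v g :
  adjB E (pm @^-1: Fs) S = pm @^-1: S -> E v g -> g \in S -> pm v \in Fs -> pm v \in S.
Proof.
move=> adjS vg Sg Fv; have: v \in adjB E (pm @^-1: Fs) S.
  by rewrite inE inE Fv; apply/existsP; exists g; rewrite Sg.
by rewrite adjS inE.
Qed.

Lemma adjB_mate_connect (Fs S : {set F}) x y :
  succ_closed Fs -> adjB E (pm @^-1: Fs) S = pm @^-1: S ->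
  connect G x y -> frep x \in Fs -> frep y \in S -> frep x \in S.
Proof.
move=> cFs adjS xy Fx Sy.
suff /implyP: (frep x \in Fs) ==> (frep x \in S) by apply.
apply: (connect_closed_rev (A := [pred z | (frep z \in Fs) ==> (frep z \in S)]) _ xy).
  move=> a b ab /= /implyP SFb; apply/implyP => Fa.
  move: {SFb}(SFb (succ_closed_connect cFs (connect1 ab) Fa)).
  case: a b ab Fa => [v|f] [u|g] //=; rewrite inM.
    by case/andP=> vg _ Fv Sg; apply: adjB_mate adjS vg Sg Fv.
  by case/andP=> _ /eqP ->.
by rewrite /= Sy implybT.
Qed.

Definition ancestors (Fs : {set F}) g : {set F} :=
  [set h in Fs | connect G (inr h) (inr g)].

Lemma ancestors_self_contained (Fs : {set F}) g :
  self_contained_in E (pm @^-1: Fs) Fs (ancestors Fs g).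
Proof.
have AFs : ancestors Fs g \subset Fs by apply/subsetP=> h; rewrite inE => /andP [].
rewrite self_containedE AFs eqEsubset preimset_sub_adjB // andbT.
apply/subsetP=> v; rewrite !inE => /andP [Fv /existsP [h]].
rewrite inE => /andP [/andP [Fh hg] vh].
rewrite Fv; have [->//|vNh] := eqVneq (pm v) h.
apply: connect_trans (connect1 (gedge_mate v)) (connect_trans _ hg).
by apply: connect1; rewrite /= inM vh.
Qed.

Lemma ancestors_sub (Fs S : {set F}) g :
  succ_closed Fs -> adjB E (pm @^-1: Fs) S = pm @^-1: S -> g \in S ->
  ancestors Fs g \subset S.
Proof.
move=> cFs adjS Sg; apply/subsetP=> h; rewrite inE => /andP [Fh hg].
exact: (adjB_mate_connect cFs adjS hg).
Qed.

Lemma minimal_self_containedP (Fs S : {set F}) :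
  minimal_self_contained_in E (pm @^-1: Fs) Fs S ->
  [/\ S \subset Fs, adjB E (pm @^-1: Fs) S = pm @^-1: S & S != set0].
Proof. by case/and3P; rewrite self_containedE => /andP [SFs /eqP adjS] S0 _. Qed.

Lemma minimal_ancestors (Fs S : {set F}) g :
  succ_closed Fs -> minimal_self_contained_in E (pm @^-1: Fs) Fs S -> g \in S ->
  S = ancestors Fs g.
Proof.
move=> cFs minS Sg; have [SFs adjS _] := minimal_self_containedP minS.
have AS := ancestors_sub cFs adjS Sg.
have gA : g \in ancestors Fs g by rewrite inE (subsetP SFs) ?connect0.
case/and3P: minS => _ _ /forallP/(_ (ancestors Fs g)).
rewrite ancestors_self_contained properEneq AS andbT => /implyP minS.
have A0 : ancestors Fs g != set0 by apply/set0Pn; exists g.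
by apply/esym/eqP/negPn/negP => AnS; have := minS; rewrite AnS A0 => /(_ isT).
Qed.

Lemma minimal_fcl (Fs S : {set F}) g :
  succ_closed Fs -> minimal_self_contained_in E (pm @^-1: Fs) Fs S -> g \in S ->
  fcl g = S.
Proof.
move=> cFs minS Sg; have [SFs _ _] := minimal_self_containedP minS.
have SA h : h \in S -> S = ancestors Fs h by apply: minimal_ancestors.
apply/setP=> f; rewrite !inE; apply/andP/idP => [[gf fg]|Sf].
  have Ff : f \in Fs := succ_closed_connect cFs gf (subsetP SFs g Sg).
  by rewrite (SA g Sg) inE Ff.
by move: (Sg) (Sf); rewrite {1}(SA f Sf) (SA g Sg) !inE => /andP [_ ->] /andP [_ ->].
Qed.

Lemma frep_preimset (S : {set F}) : frep @^-1: S = inr @: S :|: inl @: (pm @^-1: S).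
Proof.
apply/setP=> -[v|f]; rewrite !inE /=.
  by rewrite (mem_imset _ _ (@inl_inj _ _)) inE orbC; case: imsetP => [[]|_] //; rewrite orbF.
by rewrite (mem_imset _ _ (@inr_inj _ _)); case: imsetP => [[]|_] //; rewrite orbF.
Qed.

Definition add_cluster (Vs : {set V}) (S : {set F}) (acc : cgraph V F) : cgraph V F :=
  (alg_cluster E Vs S |: acc.1,
   acc.2 :|: [set (inl v, alg_cluster E Vs S) | v in adjB E setT S :\: adjB E Vs S]).

Lemma merged_part_add (Fs S D : {set F}) :
  succ_closed Fs -> minimal_self_contained_in E (pm @^-1: Fs) Fs S ->
  merged_part (S :|: D) = add_cluster (pm @^-1: Fs) S (merged_part D).
Proof.
move=> cFs minS; have [SFs adjS /set0Pn [g0 Sg0]] := minimal_self_containedP minS.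
have mclS g : g \in S -> mcl g = frep @^-1: S by move=> Sg; rewrite /mcl (minimal_fcl cFs minS Sg).
rewrite /merged_part /add_cluster imsetU bigcup_setU /=.
have -> : alg_cluster E (pm @^-1: Fs) S = frep @^-1: S by rewrite /alg_cluster adjS frep_preimset.
congr pair; [|rewrite setUC]; congr (_ :|: _).
  apply/setP=> X; rewrite inE.
  by apply/imsetP/eqP => [[g Sg ->]|->]; [apply: mclS | exists g0 => //; rewrite mclS].
apply/setP=> -[x Y]; apply/bigcupP/imsetP => [[g Sg /imsetP [v]]|[v]].
  rewrite inE (minimal_fcl cFs minS Sg) => /andP [vg vNS] [-> ->].
  exists v; last by rewrite mclS.
  by rewrite adjS !inE vNS; apply/existsP; exists g; rewrite Sg.
rewrite adjS !inE => /andP [vNS /existsP [g /andP [Sg vg]]] [-> ->].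
exists g => //; apply/imsetP; exists v; last by rewrite mclS.
by rewrite inE vg (minimal_fcl cFs minS Sg).
Qed.

Lemma succ_closed_setD (Fs S : {set F}) :
  succ_closed Fs -> adjB E (pm @^-1: Fs) S = pm @^-1: S -> succ_closed (Fs :\: S).
Proof.
move=> cFs adjS v g vg; rewrite !inE => /andP [vNS Fv]; rewrite (cFs v g vg Fv) andbT.
by apply: contra vNS => Sg; apply: adjB_mate adjS vg Sg Fv.
Qed.

Lemma alg1_merged Vs Fs acc out :
  alg1 E Vs Fs acc out -> Vs = pm @^-1: Fs -> succ_closed Fs ->
  acc = merged_part (~: Fs) -> out = merged_part setT.
Proof.
elim=> {Vs Fs acc out} [acc _ _ ->|Vs Fs S acc out _ minS _ IH eVs cFs eacc].
  by rewrite setC0.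
subst Vs acc; have [SFs adjS _] := minimal_self_containedP minS.
apply: IH; first by rewrite adjS preimsetD.
  exact: succ_closed_setD.
by rewrite setCD [~: Fs :|: S]setUC (merged_part_add _ cFs minS).
Qed.

Lemma exists_minimal_self_contained (Fs : {set F}) :
  Fs != set0 -> exists S, minimal_self_contained_in E (pm @^-1: Fs) Fs S.
Proof.
move=> Fs0; pose P S := self_contained_in E (pm @^-1: Fs) Fs S && (S != set0).
have PFs : P Fs.
  rewrite /P Fs0 andbT self_containedE subxx eqEsubset preimset_sub_adjB // andbT.
  by apply/subsetP=> v; rewrite inE => /andP [].
case: (arg_minnP (fun S : {set F} => #|S|) PFs) => S /andP [scS S0] minS.
exists S; apply/and3P; split=> //; apply/forallP=> S'; apply/implyP=> /andP [S'S S'0].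
apply/negP=> scS'; have := minS S'; rewrite /P scS' S'0 => /(_ isT).
by rewrite leqNgt (proper_card S'S).
Qed.

Lemma alg1_exists (Fs : {set F}) acc :
  succ_closed Fs -> exists out, alg1 E (pm @^-1: Fs) Fs acc out.
Proof.
have [n] := ubnP #|Fs|; elim: n Fs acc => // n IHn Fs acc szFs cFs.
have [->|Fs0] := eqVneq Fs set0; first by exists acc; rewrite preimset0; apply: alg1_stop.
have [S minS] := exists_minimal_self_contained Fs0.
have [SFs adjS /set0Pn [g Sg]] := minimal_self_containedP minS.
have szS : #|Fs :\: S| < n.
  rewrite -ltnS (leq_trans _ szFs) // ltnS proper_card // properEneq subsetDl andbT.
  by apply/eqP/setP => /(_ g); rewrite !inE Sg (subsetP SFs).
have [out run] := IHn _ (add_cluster (pm @^-1: Fs) S acc) szS (succ_closed_setD cFs adjS).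
exists out; apply: alg1_step minS _; first by rewrite Fs0 orbT.
by rewrite {1}adjS -preimsetD.
Qed.

Lemma alg1_merge_clust :
  (exists out, alg1 E setT setT (set0, set0) out) /\
  (forall out, alg1 E setT setT (set0, set0) out -> out = merge_cg M (clust E M)).
Proof.
have cT : succ_closed setT by move=> ? ? _ _; rewrite inE.
split; first by rewrite -(preimsetT pm); apply: alg1_exists.
move=> out run; rewrite merge_clust; apply: (alg1_merged run) => //.
  by rewrite preimsetT.
by rewrite /merged_part setCT imset0 big_set0.
Qed.
End MatchedGraph.

Theorem lemma41 (V F : finType) (E : V -> F -> bool) (M : {set V * F}) :
  bip_self_contained E -> perfect_matching E M ->
  (exists out, alg1 E setT setT (set0, set0) out) /\
  (forall out, alg1 E setT setT (set0, set0) out -> out = merge_cg M (clust E M)).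
Proof.
(* Self-containedness of B follows from the perfect matching. *)
move=> _ /perfect_matching_bij [pm [vof [pmK vofK E_pm inM]]].
exact: alg1_merge_clust pmK vofK E_pm inM.
Qed.
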